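(* For integers $n \geq 2$, let $L_n(x) = \left\lfloor \frac{x(2^n - x)}{2^{n-2}} \right\rfloor$ for $x \in X_n = \{1, 2, \dots, 2^n - 1\}$, and call $n$ undesirable if there exists $x \in X_n$ with $L_n(x) = 2^{n-1}$. Then an integer $n \geq 2$ is undesirable if there exists an integer $m$ with $2^{n-2}\sqrt{2} - \sqrt{2}/4 \leq m \leq 2^{n-2}\sqrt{2}$. *)

From Stdlib Require Export ZArith Reals.

(* L_n(x) = floor( x (2^n - x) / 2^(n-2) ); Z.div is floor division
   (divisor 2^(n-2) > 0 for n >= 2). *)
Definition L (n : Z) (x : Z) : Z :=
  (x * (2 ^ n - x)) / 2 ^ (n - 2).

Definition inX (n : Z) (x : Z) : Prop := (1 <= x <= 2 ^ n - 1)%Z.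

Definition undesirable (n : Z) : Prop :=
  exists x : Z, inX n x /\ L n x = (2 ^ (n - 1))%Z.

(* Put K = 2^(n-2) and x = 2K - m.  Then x (2^n - x) = (2K - m)(2K + m) = 4K^2 - m^2,
   so L_n(x) = 2K = 2^(n-1) as soon as 2K^2 - K < m^2 <= 2K^2, and this window for m^2
   is what squaring K sqrt 2 - sqrt 2 / 4 <= m <= K sqrt 2 gives, because
   (K sqrt 2 - sqrt 2 / 4)^2 = 2K^2 - K + 1/8. *)
From Stdlib Require Import ZArith Reals Lra Lia Psatz.
Open Scope R_scope.

Lemma sqr_bounds_near_sqrt2_mul (k y : R) :
  1 / 4 <= k -> k * sqrt 2 - sqrt 2 / 4 <= y <= k * sqrt 2 ->
  2 * k * k - k < y * y <= 2 * k * k.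
Proof.
  intros hk [hlo hup].
  assert (hs : sqrt 2 * sqrt 2 = 2) by (apply sqrt_sqrt; lra).
  assert (hs0 : 0 < sqrt 2) by (apply sqrt_lt_R0; lra).
  assert (hlo0 : 0 <= k * sqrt 2 - sqrt 2 / 4) by nra.
  assert (hsq : (k * sqrt 2 - sqrt 2 / 4) * (k * sqrt 2 - sqrt 2 / 4)
             = 2 * k * k - k + 1 / 8).
  { replace ((k * sqrt 2 - sqrt 2 / 4) * (k * sqrt 2 - sqrt 2 / 4))
      with ((sqrt 2 * sqrt 2) * (k * k - k / 2 + 1 / 16)) by field.
    rewrite hs; field. }
  split.
  - assert ((k * sqrt 2 - sqrt 2 / 4) * (k * sqrt 2 - sqrt 2 / 4) <= y * y)
      by (apply Rmult_le_compat; lra).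
    lra.
  - nra.
Qed.

Lemma Z_sqr_bounds_near_sqrt2_mul (K m : Z) :
  (1 <= K)%Z -> IZR K * sqrt 2 - sqrt 2 / 4 <= IZR m <= IZR K * sqrt 2 ->
  (2 * K * K - K < m * m <= 2 * K * K)%Z.
Proof.
  intros hK hm.
  assert (hK' : 1 / 4 <= IZR K) by (apply IZR_le in hK; lra).
  destruct (sqr_bounds_near_sqrt2_mul _ _ hK' hm) as [hlo hup].
  split.
  - apply lt_IZR; rewrite minus_IZR, !mult_IZR; lra.
  - apply le_IZR; rewrite !mult_IZR; lra.
Qed.

(* m^2 <= 2K^2 < 4K^2 forces |m| < 2K, which keeps x = 2K - m inside X_n. *)
Lemma sub_in_range_of_sqr_le (K m : Z) :
  (0 < K)%Z -> (m * m <= 2 * K * K)%Z -> (1 <= 2 * K - m <= 4 * K - 1)%Z.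
Proof. intros hK hm; nia. Qed.

Lemma div_diff_sqr_eq (K m : Z) :
  (0 < K)%Z -> (2 * K * K - K < m * m <= 2 * K * K)%Z ->
  ((2 * K - m) * (4 * K - (2 * K - m)) / K = 2 * K)%Z.
Proof.
  intros hK hm.
  symmetry; apply Z.div_unique_pos with (2 * K * K - m * m)%Z; [lia | ring].
Qed.

Lemma Zpow2_pred_pred (n : Z) :
  (2 <= n)%Z -> (2 ^ n = 4 * 2 ^ (n - 2))%Z /\ (2 ^ (n - 1) = 2 * 2 ^ (n - 2))%Z.
Proof.
  intros hn.
  replace n with (n - 2 + 2)%Z at 1 by ring.
  replace (n - 1)%Z with (n - 2 + 1)%Z by ring.
  rewrite !Z.pow_add_r by lia.
  split; ring.
Qed.

Lemma undesirable_of_sqr_bounds (n m : Z) :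
  (2 <= n)%Z ->
  (2 * 2 ^ (n - 2) * 2 ^ (n - 2) - 2 ^ (n - 2) < m * m
     <= 2 * 2 ^ (n - 2) * 2 ^ (n - 2))%Z ->
  undesirable n.
Proof.
  intros hn hm.
  assert (hK : (0 < 2 ^ (n - 2))%Z) by (apply Z.pow_pos_nonneg; lia).
  destruct (Zpow2_pred_pred n hn) as [h2n h2n1].
  unfold undesirable, inX, L; rewrite h2n, h2n1.
  exists (2 * 2 ^ (n - 2) - m)%Z; split.
  - exact (sub_in_range_of_sqr_le _ m hK (proj2 hm)).
  - exact (div_diff_sqr_eq _ m hK hm).
Qed.

Theorem lemma2p2 (n : Z) (hn : (2 <= n)%Z) :
  (exists m : Z,
      2 ^ Z.to_nat (n - 2) * sqrt 2 - sqrt 2 / 4 <= IZR m /\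
      IZR m <= 2 ^ Z.to_nat (n - 2) * sqrt 2) ->
  undesirable n.
Proof.
  intros [m hm].
  assert (hpow : 2 ^ Z.to_nat (n - 2) = IZR (2 ^ (n - 2)))
    by (rewrite pow_IZR, Z2Nat.id by lia; reflexivity).
  rewrite hpow in hm.
  apply (undesirable_of_sqr_bounds n m hn).
  apply Z_sqr_bounds_near_sqrt2_mul; [|exact hm].
  assert ((0 < 2 ^ (n - 2))%Z) by (apply Z.pow_pos_nonneg; lia).
  lia.
Qed.
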